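(* Let $\Omega\subset\mathbb{C}$ be a simply connected open set with conformal coordinate $z=x+iy$, let $N:\Omega\to\mathbb{S}^2\subset\mathbb{R}^3$ be a smooth harmonic map, and let $f:\Omega\to\mathbb{R}^3$ be a spherical frontal associated to $N$, i.e. a smooth map with $f_x=N\times N_y$ and $f_y=-N\times N_x$. Let $p\in\Omega$. Then $f$ is a wave front near $p$ if and only if $\operatorname{rank}(dN)_p\neq 0$.
   Context: A smooth map $N:\Omega\to\mathbb{S}^2$ is harmonic iff $N\times(N_{xx}+N_{yy})=0$; this is the integrability condition for $f_x=N\times N_y,\ f_y=-N\times N_x$, so such $f$ exists and is unique up to translation. A map $h:M\to\mathbb{R}^3$ from a surface is a frontal if there is a smooth $\mathcal{N}:M\to\mathbb{S}^2$ with $dh$ orthogonal to $\mathcal{N}$; it is a wave front (front) if the Legendrian lift $(h,\mathcal{N}):M\to\mathbb{R}^3\times\mathbb{S}^2$ is an immersion. For the spherical frontal $f$ the relevant lift is $(f,N)$. *)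

From HB Require Import structures.
From mathcomp Require Import all_boot all_order all_algebra.
From mathcomp Require Import all_classical all_reals all_analysis.
Set Implicit Arguments. Unset Strict Implicit. Unset Printing Implicit Defensive.
Import Order.TTheory GRing.Theory Num.Theory.
Import numFieldNormedType.Exports.
Local Open Scope classical_set_scope.
Local Open Scope ring_scope.

Section Defs.
Variable R : realType.

Definition ex : 'rV[R]_2 := \row_(j < 2) (if val j == 0%N then 1 else 0).
Definition ey : 'rV[R]_2 := \row_(j < 2) (if val j == 1%N then 1 else 0).

Definition dx {n} (g : 'rV[R]_2 -> 'rV[R]_n) (q : 'rV[R]_2) := derive g q ex.
Definition dy {n} (g : 'rV[R]_2 -> 'rV[R]_n) (q : 'rV[R]_2) := derive g q ey.

Definition dot3 (u v : 'rV[R]_3) : R := \sum_(i < 3) u 0 i * v 0 i.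
Definition cross (u v : 'rV[R]_3) : 'rV[R]_3 :=
  \row_(i < 3)
    (if val i == 0%N then u 0 1%:R * v 0 2%:R - u 0 2%:R * v 0 1%:R
     else if val i == 1%N then u 0 2%:R * v 0 0 - u 0 0 * v 0 2%:R
     else u 0 0 * v 0 1%:R - u 0 1%:R * v 0 0).

Definition sphere2 : set 'rV[R]_3 := [set u | dot3 u u = 1].

Fixpoint iter_derive {n} (vs : seq 'rV[R]_2) (g : 'rV[R]_2 -> 'rV[R]_n)
    : 'rV[R]_2 -> 'rV[R]_n :=
  match vs with
  | [::] => g
  | v :: vs' => fun q => derive (iter_derive vs' g) q v
  end.

Definition smooth_on {n} (A : set 'rV[R]_2) (g : 'rV[R]_2 -> 'rV[R]_n) :=
  forall (vs : seq 'rV[R]_2) (q : 'rV[R]_2), A q ->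
    {for q, continuous (iter_derive vs g)} /\
    forall v, derivable (iter_derive vs g) q v.

Definition simply_connected (A : set 'rV[R]_2) :=
  connected A /\
  forall g : R -> 'rV[R]_2,
    {within `[0, 1], continuous g} -> g 0 = g 1 -> g @` `[0, 1] `<=` A ->
    exists H : R * R -> 'rV[R]_2,
      [/\ {within `[0, 1] `*` `[0, 1], continuous H},
          H @` (`[0, 1] `*` `[0, 1]) `<=` A,
          (forall s, s \in `[0, 1] -> H (s, 0) = g s /\ H (s, 1) = g 0) &
          (forall t, t \in `[0, 1] -> H (0, t) = g 0 /\ H (1, t) = g 0)].

Definition harmonic_S2 (A : set 'rV[R]_2) (N : 'rV[R]_2 -> 'rV[R]_3) :=
  smooth_on A N /\ (forall q, A q -> sphere2 (N q)) /\
  forall q, A q -> cross (N q) (dx (dx N) q + dy (dy N) q) = 0.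

Definition spherical_frontal (A : set 'rV[R]_2) (N f : 'rV[R]_2 -> 'rV[R]_3) :=
  smooth_on A f /\
  forall q, A q -> dx f q = cross (N q) (dy N q) /\
                   dy f q = - cross (N q) (dx N q).

(* Jacobian matrix of g at q : rows are g_x(q), g_y(q); it represents dg_q *)
Definition jac_mx {n} (g : 'rV[R]_2 -> 'rV[R]_n) (q : 'rV[R]_2)
    : 'M[R]_(1 + 1, n) := col_mx (dx g q) (dy g q).

Definition immersion_at {n} (g : 'rV[R]_2 -> 'rV[R]_n) q :=
  \rank (jac_mx g q) = 2%N.

(* Legendrian lift (h, NN) : M -> R^3 x S^2 inside R^3 x R^3 = R^6 *)
Definition legendrian_lift (h NN : 'rV[R]_2 -> 'rV[R]_3) : 'rV[R]_2 -> 'rV[R]_(3 + 3) :=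
  fun q => row_mx (h q) (NN q).

Definition frontal_on (U : set 'rV[R]_2) (h NN : 'rV[R]_2 -> 'rV[R]_3) :=
  smooth_on U h /\ smooth_on U NN /\ (forall q, U q -> sphere2 (NN q)) /\
  forall q, U q -> dot3 (dx h q) (NN q) = 0 /\ dot3 (dy h q) (NN q) = 0.

Definition wave_front_on (U : set 'rV[R]_2) (h NN : 'rV[R]_2 -> 'rV[R]_3) :=
  frontal_on U h NN /\ forall q, U q -> immersion_at (legendrian_lift h NN) q.

Definition wave_front_near (A : set 'rV[R]_2) (h NN : 'rV[R]_2 -> 'rV[R]_3) p :=
  exists U : set 'rV[R]_2, [/\ open U, U p, U `<=` A & wave_front_on U h NN].

End Defs.

From HB Require Import structures.
From mathcomp Require Import all_boot all_order all_algebra.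
From mathcomp Require Import all_classical all_reals all_analysis.
From mathcomp Require Import ring lra.
Set Implicit Arguments. Unset Strict Implicit. Unset Printing Implicit Defensive.
Import Order.TTheory GRing.Theory Num.Theory.
Import numFieldNormedType.Exports.
Local Open Scope classical_set_scope.
Local Open Scope ring_scope.

(* Harmonicity of N only serves to produce f; once f is given, the equivalence
   is pointwise linear algebra.  Since N is a unit vector, N_x and N_y lie in
   the plane orthogonal to N, on which [cross N] is a quarter turn.  A
   relation a (f_x, N_x) + b (f_y, N_y) = 0 between the rows of the Jacobian of
   the Legendrian lift therefore says a N_x + b N_y = 0 and a N_y - b N_x = 0,
   whence (a^2 + b^2) dN = 0.  So the lift is an immersion exactly where
   dN <> 0, an open condition; where dN = 0 also df = 0. *)

Lemma scale_sqr_eq0 (K : comPzRingType) (V : lmodType K) (a b : K) (X Y : V) :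
  a *: X + b *: Y = 0 -> a *: Y = b *: X ->
  (a ^+ 2 + b ^+ 2) *: X = 0 /\ (a ^+ 2 + b ^+ 2) *: Y = 0.
Proof.
move=> comb rot.
have scalerC k l (Z : V) : k *: (l *: Z) = l *: (k *: Z) by rewrite !scalerA mulrC.
split.
- by rewrite scalerDl !expr2 -!scalerA -rot [b *: _]scalerC -scalerDr comb scaler0.
- by rewrite scalerDl !expr2 -!scalerA rot scalerC -scalerDr comb scaler0.
Qed.

Section VectorAlgebra.
Variable R : realType.
Implicit Types (u v w n X Y : 'rV[R]_3) (a b : R).

Lemma sum3 (F : 'I_3 -> R) : \sum_(i < 3) F i = F 0 + F 1%:R + F 2%:R.
Proof. by rewrite !big_ord_recr big_ord0 /= add0r; congr (_ + _ + _); congr F; apply/val_inj. Qed.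

Lemma row3P u v :
  u 0 0 = v 0 0 -> u 0 1%:R = v 0 1%:R -> u 0 2%:R = v 0 2%:R -> u = v.
Proof.
move=> e0 e1 e2; apply/rowP => -[[|[|[|//]]] Hi].
- by rewrite (_ : Ordinal Hi = 0) //; apply/val_inj.
- by rewrite (_ : Ordinal Hi = 1%:R) //; apply/val_inj.
- by rewrite (_ : Ordinal Hi = 2%:R) //; apply/val_inj.
Qed.

Lemma cross_is_linear u : linear (cross u).
Proof. by move=> a v w; apply: row3P; rewrite !mxE /=; ring. Qed.

HB.instance Definition _ u :=
  GRing.isLinear.Build R 'rV[R]_3 'rV[R]_3 *:%R (cross u) (cross_is_linear u).

Lemma dot3C u v : dot3 u v = dot3 v u.
Proof. by rewrite /dot3; apply: eq_bigr => i _; rewrite mulrC. Qed.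

Lemma dot3Nl u v : dot3 (- u) v = - dot3 u v.
Proof. by rewrite /dot3 -sumrN; apply: eq_bigr => i _; rewrite mxE mulNr. Qed.

Lemma dot3_crossl u v : dot3 (cross u v) u = 0.
Proof. by rewrite /dot3 sum3 !mxE /=; ring. Qed.

Lemma cross_crossr u v w : cross u (cross v w) = dot3 u w *: v - dot3 u v *: w.
Proof. by apply: row3P; rewrite /dot3 !sum3 !mxE /=; ring. Qed.

Lemma cross_cross_tangent n X : dot3 n n = 1 -> dot3 n X = 0 -> cross n (cross n X) = - X.
Proof. by move=> nn nX; rewrite cross_crossr nX nn scale0r scale1r sub0r. Qed.

Lemma tangent_pair_indep n X Y a b :
  dot3 n n = 1 -> dot3 n X = 0 -> dot3 n Y = 0 -> X != 0 \/ Y != 0 ->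
  a *: X + b *: Y = 0 -> a *: cross n Y - b *: cross n X = 0 -> a = 0 /\ b = 0.
Proof.
move=> nn nX nY XY0 comb rot.
have {}rot : a *: Y = b *: X.
  have := congr1 (cross n) rot; rewrite linearB !linearZ /= !cross_cross_tangent //.
  by rewrite linear0 !scalerN opprK addrC => /subr0_eq.
have [sX sY] := scale_sqr_eq0 comb rot.
have ab0 : a ^+ 2 + b ^+ 2 = 0.
  by case: XY0 => /negPf nz; [move/eqP: sX | move/eqP: sY]; rewrite scaler_eq0 nz orbF => /eqP.
by split; apply/eqP; rewrite -sqrf_eq0; apply/eqP; nra.
Qed.

End VectorAlgebra.

Lemma mxrank_col_mx_indep (F : fieldType) m (u v : 'rV[F]_m) :
  (forall a b, a *: u + b *: v = 0 -> a = 0 /\ b = 0) -> \rank (col_mx u v) = 2.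
Proof.
move=> indep; apply/eqP; rewrite eqn_leq rank_leq_row row_leq_rank.
apply/inj_row_free => w.
rewrite -[w]hsubmxK (@mul_row_col F 1 1 1) [lsubmx w]mx11_scalar [rsubmx w]mx11_scalar.
rewrite !mul_scalar_mx => /indep[-> ->].
by apply/rowP => i; rewrite !mxE; case: splitP => j _; rewrite (ord1 j) mxE.
Qed.

Section Derivatives.
Variables (R : realType) (V : normedModType R).

Lemma derive_coord m n (g : V -> 'M[R]_(m, n)) q v i j :
  derivable g q v -> 'D_v (fun x => g x i j) q = 'D_v g q i j.
Proof. by move=> dg; rewrite (derive_mx dg) mxE. Qed.

Lemma derivable_coord m n (g : V -> 'M[R]_(m, n)) q v i j :
  derivable g q v -> derivable (fun x => g x i j) q v.
Proof. by move/derivable_mxP; apply. Qed.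

Lemma derivable_row_mx m n (g : V -> 'rV[R]_m) (h : V -> 'rV[R]_n) q v :
  derivable g q v -> derivable h q v -> derivable (fun x => row_mx (g x) (h x)) q v.
Proof.
move=> dg dh; apply/derivable_mxP => i j; rewrite -(splitK j).
case: (fintype.split j) => k /=.
- under eq_fun do rewrite row_mxEl; exact: derivable_coord.
- under eq_fun do rewrite row_mxEr; exact: derivable_coord.
Qed.

Lemma derive_row_mx m n (g : V -> 'rV[R]_m) (h : V -> 'rV[R]_n) q v :
  derivable g q v -> derivable h q v ->
  'D_v (fun x => row_mx (g x) (h x)) q = row_mx ('D_v g q) ('D_v h q).
Proof.
move=> dg dh; apply/matrixP => i j.
rewrite -(derive_coord _ _ (derivable_row_mx dg dh)) -(splitK j).
case: (fintype.split j) => k /=.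
- by under eq_fun do rewrite row_mxEl; rewrite row_mxEl derive_coord.
- by under eq_fun do rewrite row_mxEr; rewrite row_mxEr derive_coord.
Qed.

Lemma derive_dot3 (g h : V -> 'rV[R]_3) q v :
  derivable g q v -> derivable h q v ->
  'D_v (fun x => dot3 (g x) (h x)) q = dot3 ('D_v g q) (h q) + dot3 (g q) ('D_v h q).
Proof.
move=> dg dh.
rewrite (_ : (fun x => _) = \sum_(i < 3) (fun x => g x 0 i * h x 0 i)); last first.
  by rewrite fct_sumE; apply/funext.
rewrite derive_sum => [|i]; last by apply: derivableM; apply: derivable_coord.
rewrite /dot3 -big_split; apply: eq_bigr => i _ /=.
rewrite deriveM ?derive_coord //; try exact: derivable_coord.
by rewrite [RHS]addrC [_ * h q 0 i]mulrC.
Qed.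

Lemma sphere2_derive_tangent (N : V -> 'rV[R]_3) q v :
  (\forall x \near q, sphere2 (N x)) -> derivable N q v -> dot3 (N q) ('D_v N q) = 0.
Proof.
move=> sN dN; have : 'D_v (fun x => dot3 (N x) (N x)) q = 0.
  by rewrite (near_eq_derive (g := cst (1 : R^o)) v sN) derive_cst.
by rewrite derive_dot3 // dot3C -mulr2n => /eqP; rewrite mulrn_eq0 => /eqP.
Qed.

End Derivatives.

Lemma open_neq0 (R : numFieldType) (T : topologicalType) (W : normedModType R)
    (A : set T) (g : T -> W) :
  open A -> (forall q, A q -> {for q, continuous g}) -> open [set q | A q /\ g q != 0].
Proof.
move=> oA cg; rewrite openE => q [Aq gq0]; rewrite /interior.
have nA : \forall x \near q, A x by apply: open_nbhs_nbhs.
near=> x; split; near: x; [exact: nA | exact: cvgr_neq0 (cg q Aq) gq0].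
Unshelve. all: by end_near.
Qed.

Lemma jac_mx_rank_eq0 (R : realType) n (g : 'rV[R]_2 -> 'rV[R]_n) q :
  (\rank (jac_mx g q) == 0%N) = (dx g q == 0) && (dy g q == 0).
Proof. by rewrite mxrank_eq0 /jac_mx col_mx_eq0. Qed.

Section Smooth.
Variables (R : realType) (n : nat) (A : set 'rV[R]_2) (g : 'rV[R]_2 -> 'rV[R]_n).
Hypothesis smg : smooth_on A g.

Lemma smooth_onS (B : set 'rV[R]_2) : B `<=` A -> smooth_on B g.
Proof. by move=> BA vs q /BA; apply: smg. Qed.

Lemma smooth_on_derivable q v : A q -> derivable g q v.
Proof. by move=> Aq; apply: (smg [::] Aq).2. Qed.

Lemma smooth_on_continuous_dx q : A q -> {for q, continuous (dx g)}.
Proof. by move=> Aq; apply: (smg [:: ex R] Aq).1. Qed.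

Lemma smooth_on_continuous_dy q : A q -> {for q, continuous (dy g)}.
Proof. by move=> Aq; apply: (smg [:: ey R] Aq).1. Qed.

Lemma open_jac_mx_rank_neq0 : open A -> open [set q | A q /\ \rank (jac_mx g q) != 0%N].
Proof.
move=> oA.
have -> : [set q | A q /\ \rank (jac_mx g q) != 0%N] =
          [set q | A q /\ dx g q != 0] `|` [set q | A q /\ dy g q != 0].
  apply/seteqP; split => q /=.
  - by rewrite jac_mx_rank_eq0 negb_and => -[Aq /orP[]]; [left | right].
  - by rewrite jac_mx_rank_eq0 negb_and => -[] [Aq nz]; split=> //; apply/orP; [left | right].
apply: openU; apply: open_neq0 => // q Aq.
- exact: smooth_on_continuous_dx.
- exact: smooth_on_continuous_dy.
Qed.
End Smooth.

Lemma jac_mx_legendrian_lift (R : realType) (h NN : 'rV[R]_2 -> 'rV[R]_3) q :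
  derivable h q (ex R) -> derivable h q (ey R) ->
  derivable NN q (ex R) -> derivable NN q (ey R) ->
  jac_mx (legendrian_lift h NN) q =
  col_mx (row_mx (dx h q) (dx NN q)) (row_mx (dy h q) (dy NN q)).
Proof. by move=> *; rewrite /jac_mx /dx /dy !derive_row_mx. Qed.

Section SphericalFrontal.
Variables (R : realType) (A : set 'rV[R]_2) (N f : 'rV[R]_2 -> 'rV[R]_3).
Hypotheses (oA : open A) (smN : smooth_on A N) (sphN : forall q, A q -> sphere2 (N q)).
Hypothesis frontal : spherical_frontal A N f.

Lemma spherical_frontal_on U : U `<=` A -> frontal_on U f N.
Proof.
move=> UA; have [smf fN] := frontal.
split; first exact: (smooth_onS smf UA).
split; first exact: (smooth_onS smN UA).
split=> q /UA Aq; first exact: sphN.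
have [-> ->] := fN q Aq; split; first exact: dot3_crossl.
by rewrite dot3Nl dot3_crossl oppr0.
Qed.

Lemma spherical_lift_immersion_at q :
  A q -> immersion_at (legendrian_lift f N) q <-> \rank (jac_mx N q) != 0%N.
Proof.
move=> Aq; have [smf fN] := frontal; have [fx fy] := fN q Aq.
have df v : derivable f q v by apply: (smooth_on_derivable smf).
have dN v : derivable N q v by apply: (smooth_on_derivable smN).
have tangent v : dot3 (N q) ('D_v N q) = 0.
  by apply: sphere2_derive_tangent => //; apply: filterS sphN _; apply: open_nbhs_nbhs.
rewrite /immersion_at (jac_mx_legendrian_lift (df _) (df _) (dN _) (dN _)) fx fy.
split=> [rk2 | rk].
- apply/negP; rewrite jac_mx_rank_eq0 => /andP[/eqP x0 /eqP y0]; move: rk2.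
  by rewrite x0 y0 linear0 oppr0 !row_mx0 col_mx0 mxrank0.
- apply: mxrank_col_mx_indep => a b.
  rewrite !scale_row_mx add_row_mx -row_mx0 scalerN => /eq_row_mx[rot comb].
  apply: tangent_pair_indep (sphN Aq) (tangent _) (tangent _) _ comb rot.
  by move: rk; rewrite jac_mx_rank_eq0 negb_and => /orP.
Qed.

End SphericalFrontal.

Theorem proposition2p1 (R : realType) (Omega : set 'rV[R]_2)
    (N f : 'rV[R]_2 -> 'rV[R]_3) (p : 'rV[R]_2) :
  open Omega -> simply_connected Omega ->
  harmonic_S2 Omega N -> spherical_frontal Omega N f ->
  Omega p ->
  (wave_front_near Omega f N p <-> \rank (jac_mx N p) != 0%N).
Proof.
move=> oO _ [smN [sphN _]] frontal Op; split.
- case=> U [_ Up UO [_ immU]].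
  exact/(spherical_lift_immersion_at oO smN sphN frontal Op)/immU.
- move=> rk; exists [set q | Omega q /\ \rank (jac_mx N q) != 0%N]; split => //.
  + exact: (open_jac_mx_rank_neq0 smN oO).
  + by move=> q [].
  + split=> [|q [Oq rkq]]; first by apply: (spherical_frontal_on smN sphN frontal) => q [].
    exact/(spherical_lift_immersion_at oO smN sphN frontal Oq).
Qed.
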